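(* Let $m\ge1$ and $Q=T_{(2^m)}$. Then $K_Q(2)$ is isomorphic to the dihedral group $D_{2^{m+1}}$ of order $2^{m+1}$.
   Context: Let $\{|0\rangle,|1\rangle\}$ be the computational basis of $\mathbb{C}^2$ and $X$ the Pauli shift $X|q\rangle=|q+1 \bmod 2\rangle$. For $\xi:\mathbb{Z}_2\to U(1)$ let $S_\xi=\mathrm{diag}(\xi(0),\xi(1))$; $T=\{S_\xi:\xi(0)\xi(1)=1\}$ and $T_{(2^m)}=\{S\in T:S^{2^m}=\mathbbm{1}\}$. $K_Q(2)$ is the subgroup of $SU(2)$ generated by all $S_\xi X^b$ with $S_\xi\in Q$, $b\in\mathbb{Z}_2$. $D_{2^{m+1}}$ denotes the dihedral group $\langle r,s\mid r^{2^m}=s^2=1,srs=r^{-1}\rangle$. *)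

From mathcomp Require Import all_boot all_order all_algebra all_fingroup all_solvable all_field.
Set Implicit Arguments. Unset Strict Implicit. Unset Printing Implicit Defensive.
Import GRing.Theory Num.Theory.
Local Open Scope ring_scope.

(* Pauli shift X|q> = |q+1 mod 2> : entry (i,j) is 1 iff i = j+1 mod 2. *)
Definition Xmat : 'M[algC]_2 :=
  \matrix_(i < 2, j < 2) (if (i : nat) == ((j + 1) %% 2)%N then 1 else 0).

Definition Smat (xi : 'I_2 -> algC) : 'M[algC]_2 := diag_mx (\row_i xi i).

Definition inT (A : 'M[algC]_2) : Prop :=
  exists xi : 'I_2 -> algC,
    (forall q, `|xi q| = 1) /\ xi 0 * xi 1 = 1 /\ A = Smat xi.

Definition T2pow (m : nat) (A : 'M[algC]_2) : Prop :=
  inT A /\ A ^+ (2 ^ m) = 1.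

Inductive gen_by (P : 'M[algC]_2 -> Prop) : 'M[algC]_2 -> Prop :=
  | gen_one : gen_by P 1%:M
  | gen_base A : P A -> gen_by P A
  | gen_mul A B : gen_by P A -> gen_by P B -> gen_by P (A *m B)
  | gen_inv A : gen_by P A -> gen_by P (invmx A).

Definition K_Q (Q : 'M[algC]_2 -> Prop) : 'M[algC]_2 -> Prop :=
  gen_by (fun A => exists S (b : 'I_2), Q S /\ A = S *m (Xmat ^+ b)).

From mathcomp Require Import all_boot all_order all_algebra all_fingroup all_solvable all_field.
Set Implicit Arguments. Unset Strict Implicit. Unset Printing Implicit Defensive.
Import GRing.Theory Num.Theory.
Local Open Scope ring_scope.

(* 'D_(2N) is generated by an element x of order N and an involution y outside
   <[x]> that inverts x, so every element is uniquely x^a y^b (a mod N, b mod 2)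
   and x^a y^b |-> R^a X^b is a faithful representation as soon as R^N = 1,
   X^2 = 1, X R = R^-1 X, R^a = 1 only for N | a, and R^a X is never 1.
   R = diag(w, w^-1) with w a primitive N-th root of unity works, and for
   N = 2^m the elements of T_(2^m) are exactly the powers of R.  So the
   generators S X^b of K_Q(2) form precisely the image of the representation,
   which, being the image of a group, is already closed under products and
   inverses. *)

Section DihedralRepresentation.

Variables (gT : finGroupType) (G : {group gT}) (x y : gT) (n : nat).
Hypotheses (ox : #[x]%g = n) (oy : #[y]%g = 2%N) (xy : (x ^ y = x^-1)%g).
Hypotheses (notXy : y \notin <[x]>%g) (defG : (<[x]> * <[y]>)%g = G).

Variables (A : pzRingType) (r s : A).
Hypotheses (rn : r ^+ n = 1) (s2 : s ^+ 2 = 1) (sr : s * r = r ^+ n.-1 * s).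

(* Junk value 0 outside the set of products x^a y^b. *)
Definition dihedral_rep (g : gT) : A :=
  if [pick p : 'I_n * 'I_2 | g == (x ^+ p.1 * y ^+ p.2)%g] is Some p
  then r ^+ p.1 * s ^+ p.2 else 0.

Let n_gt0 : (0 < n)%N. Proof. by rewrite -ox order_gt0. Qed.
Let y2 : (y ^+ 2 = 1)%g. Proof. by rewrite -oy expg_order. Qed.

Lemma mulg_yX c : (y * x ^+ c = x ^+ (c * n.-1)%N * y)%g.
Proof.
have yx : (y * x = x ^+ n.-1 * y)%g.
  have yV : (y^-1 = y)%g by rewrite invg_expg oy.
  by rewrite -ox -invg_expg -xy conjgE yV -!mulgA -[(y * y)%g]/(y ^+ 2)%g y2 mulg1.
elim: c => [|c IH]; first by rewrite mulg1 mul1g.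
by rewrite expgSr mulgA IH -mulgA yx mulgA -expgD mulSn addnC.
Qed.

Lemma expg_yX b c :
  (y ^+ b * x ^+ c = x ^+ (c * n.-1 ^ b)%N * y ^+ b)%g.
Proof.
elim: b => [|b IH]; first by rewrite mul1g mulg1 muln1.
by rewrite expgS -mulgA IH mulgA mulg_yX -mulgA expnSr mulnA.
Qed.

Lemma mulr_sX c : s * r ^+ c = r ^+ (c * n.-1)%N * s.
Proof.
elim: c => [|c IH]; first by rewrite mulr1 mul1r.
by rewrite exprSr mulrA IH -mulrA sr mulrA -exprD mulSn addnC.
Qed.

Lemma expr_sX b c : s ^+ b * r ^+ c = r ^+ (c * n.-1 ^ b)%N * s ^+ b.
Proof.
elim: b => [|b IH]; first by rewrite mul1r mulr1 muln1.
by rewrite exprS -mulrA IH mulrA mulr_sX -mulrA expnSr mulnA.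
Qed.

Lemma dihedral_decomp g : g \in G -> exists a (b : 'I_2), g = (x ^+ a * y ^+ b)%g.
Proof.
rewrite -defG => /mulsgP[u v /cycleP[a ->] /cycleP[b ->] ->].
by exists a, (Ordinal (ltn_pmod b (isT : (0 < 2)%N))); rewrite /= expg_mod.
Qed.

Lemma dihedral_decomp_uniq a c (b d : 'I_2) :
  (x ^+ a * y ^+ b = x ^+ c * y ^+ d)%g -> b = d /\ (x ^+ a = x ^+ c)%g.
Proof.
have notXpow a' c' : (x ^+ a' <> x ^+ c' * y)%g.
  move=> eq_xy; apply: (negP notXy).
  by rewrite -[y](mulKg (x ^+ c')%g) -eq_xy groupM ?groupV ?mem_cycle.
case: b d => [[|[|//]] ?] [[|[|//]] ?]; rewrite ?expg0 ?expg1 ?mulg1.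
- by split=> //; apply: val_inj.
- by move/notXpow.
- by move/esym/notXpow.
- by move/mulIg; split=> //; apply: val_inj.
Qed.

Lemma dihedral_repE a b : dihedral_rep (x ^+ a * y ^+ b)%g = r ^+ a * s ^+ b.
Proof.
suff repE a' (b' : 'I_2) : dihedral_rep (x ^+ a' * y ^+ b')%g = r ^+ a' * s ^+ b'.
  have := repE a (Ordinal (ltn_pmod b (isT : (0 < 2)%N))).
  by rewrite /= expg_mod // expr_mod.
rewrite /dihedral_rep; case: pickP => [p /eqP | no_pick].
  case/dihedral_decomp_uniq=> -> /eqP; rewrite eq_expg_mod_order ox => /eqP ac.
  by rewrite -(expr_mod p.1 rn) -ac expr_mod.
have := no_pick (Ordinal (ltn_pmod a' n_gt0), b').
by rewrite /= -ox expg_mod_order eqxx.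
Qed.

Lemma dihedral_rep1 : dihedral_rep 1%g = 1.
Proof. by have := dihedral_repE 0 0; rewrite !expg0 mulg1 !expr0 mulr1. Qed.

Lemma dihedral_repM :
  {in G &, {morph dihedral_rep : g h / (g * h)%g >-> g * h}}.
Proof.
move=> g h /dihedral_decomp[a [b ->]] /dihedral_decomp[c [d ->]].
rewrite mulgA -(mulgA _ (y ^+ b)%g) expg_yX mulgA -expgD -mulgA -expgD.
rewrite !dihedral_repE mulrA -(mulrA _ (s ^+ b)) expr_sX.
by rewrite mulrA -exprD -mulrA -exprD.
Qed.

Hypotheses (r_faithful : forall a, r ^+ a = 1 -> (n %| a)%N)
           (rs_neq1 : forall a, r ^+ a * s != 1).

Lemma dihedral_rep_eq1 g : g \in G -> dihedral_rep g = 1 -> g = 1%g.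
Proof.
case/dihedral_decomp=> a [[[|[|//]] ?] ->]; rewrite dihedral_repE.
  by rewrite !expg0 expr0 !mulr1 mulg1 => /r_faithful; rewrite -ox order_dvdn => /eqP.
by rewrite expr1 => /eqP; rewrite (negPf (rs_neq1 a)).
Qed.

Lemma dihedral_rep_inj : {in G &, injective dihedral_rep}.
Proof.
move=> g h Gg Gh fgh; apply/eqP; rewrite eq_mulgV1; apply/eqP.
apply: dihedral_rep_eq1; first by rewrite groupM ?groupV.
by rewrite dihedral_repM ?groupV // fgh -dihedral_repM ?groupV // mulgV dihedral_rep1.
Qed.

End DihedralRepresentation.

Lemma ord2_neq0 (i : 'I_2) : i != 0 -> i = 1.
Proof. by case: i => [[|[|//]] ?] // _; apply: val_inj. Qed.

Lemma eq_Smat (xi eta : 'I_2 -> algC) : xi =1 eta -> Smat xi = Smat eta.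
Proof. by move=> eq_xi; congr diag_mx; apply/rowP => i; rewrite !mxE. Qed.

Definition Tmat (z : algC) : 'M[algC]_2 := Smat (fun i => if i == 0 then z else z^-1).

Lemma Tmat00 z : Tmat z 0 0 = z.
Proof. by rewrite !mxE. Qed.

Lemma Tmat1 : Tmat 1 = 1.
Proof. by apply/matrixP => i j; rewrite !mxE invr1 if_same. Qed.

Lemma TmatM z z' : Tmat z * Tmat z' = Tmat (z * z').
Proof.
rewrite -mulmxE mulmx_diag; congr diag_mx; apply/rowP => i.
by rewrite !mxE; case: ifP; rewrite ?invfM.
Qed.

Lemma TmatX z k : Tmat z ^+ k = Tmat (z ^+ k).
Proof.
elim: k => [|k IH]; first by rewrite Tmat1.
by rewrite exprS IH TmatM exprS.
Qed.

Lemma Tmat_eq1 z : Tmat z = 1 -> z = 1.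
Proof. by move/(congr1 (fun M : 'M_2 => M 0 0)); rewrite Tmat00 mxE. Qed.

Lemma TmatX_neq1 z : Tmat z * Xmat != 1.
Proof.
apply/eqP => /(congr1 (fun M : 'M_2 => M 0 0)) /eqP.
by rewrite -mulmxE mul_diag_mx !mxE mulr0 eq_sym oner_eq0.
Qed.

Lemma Xmat2 : Xmat ^+ 2 = 1.
Proof.
apply/matrixP => i j; rewrite expr2 -mulmxE !mxE !big_ord_recl big_ord0 !mxE.
by case: i j => [[|[|//]] ?] [[|[|//]] ?]; rewrite /= ?mulr0 ?mulr1 ?addr0 ?add0r.
Qed.

Lemma XmatT z : Xmat * Tmat z = Tmat z^-1 * Xmat.
Proof.
apply/matrixP => i j; rewrite -!mulmxE mul_mx_diag mul_diag_mx !mxE.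
by case: i j => [[|[|//]] ?] [[|[|//]] ?]; rewrite /= ?mulr0 ?mul0r ?mulr1 ?mul1r ?invrK.
Qed.

Lemma inT_expP n A : (0 < n)%N ->
  (inT A /\ A ^+ n = 1) <-> exists2 z, z ^+ n = 1 & A = Tmat z.
Proof.
move=> n_gt0; split=> [[[xi [_ [xi01 ->]]] xin] | [z zn ->]].
  have xi1 : xi 1 = (xi 0)^-1 by rewrite (mulr1_eq xi01).
  have xiE : Smat xi = Tmat (xi 0).
    by apply: eq_Smat => i; case: eqP => [-> // | /eqP/ord2_neq0 ->].
  by rewrite xiE TmatX in xin *; exists (xi 0) => //; apply: Tmat_eq1.
have z_neq0 : z != 0.
  by apply: contra_eq_neq zn => ->; rewrite expr0n eqn0Ngt n_gt0 eq_sym oner_eq0.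
have z_norm : `|z| = 1.
  by apply/eqP; rewrite -(pexpr_eq1 n_gt0) ?normr_ge0 // -normrX zn normr1.
split; last by rewrite TmatX zn Tmat1.
exists (fun i => if i == 0 then z else z^-1); split; last by rewrite /= divff.
by move=> q; case: ifP; rewrite ?normrV ?unitfE // z_norm invr1.
Qed.

Lemma gen_by_morph_image (gT : finGroupType) (f : gT -> 'M[algC]_2)
    (P : 'M[algC]_2 -> Prop) :
  {morph f : g h / (g * h)%g >-> g *m h} -> f 1%g = 1%:M ->
  (forall A, P A <-> exists g, f g = A) ->
  forall A, gen_by P A <-> exists g, f g = A.
Proof.
move=> fM f1 PE A; split=> [|[g <-]]; last by apply/gen_base/PE; exists g.
elim=> [|B /PE // |_ _ _ [g <-] _ [h <-]|_ _ [g <-]].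
- by exists 1%g.
- by exists (g * h)%g.
- have fgV : f g *m f g^-1%g = 1%:M by rewrite -fM mulgV.
  have [fg_unit _] := mulmx1_unit fgV.
  by exists g^-1%g; rewrite -[f g^-1%g](mulKmx fg_unit) fgV mulmx1.
Qed.

Lemma T2pow_genP m w A : (2 ^ m).-primitive_root w ->
  (exists S (b : 'I_2), T2pow m S /\ A = S *m Xmat ^+ b) <->
  exists a (b : 'I_2), A = Tmat w ^+ a * Xmat ^+ b.
Proof.
have N_gt0 : (0 < 2 ^ m)%N by rewrite expn_gt0.
move=> w_prim; split=> [[S [b [/(inT_expP _ N_gt0)[z zN ->] ->]]] | [a [b ->]]].
  by have [i ->] := prim_rootP w_prim zN; exists i, b; rewrite TmatX.
exists (Tmat w ^+ a), b; split=> //; apply/(inT_expP _ N_gt0).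
by exists (w ^+ a); rewrite ?TmatX // exprAC (prim_expr_order w_prim) expr1n.
Qed.

Theorem lemma8 (m : nat) (hm : (1 <= m)%N) :
  exists f : 'D_(2 ^ m.+1) -> 'M[algC]_2,
    injective f /\
    (forall x y : 'D_(2 ^ m.+1), f (x * y)%g = f x *m f y) /\
    (forall A : 'M[algC]_2, K_Q (T2pow m) A <-> exists x, f x = A).
Proof.
have [[x y] genD [oy xy]] :=
  generators_2dihedral (hm : (1 < m.+1)%N) (isog_refl [set: 'D_(2 ^ m.+1)]%G).
have [_ _ _ defD _] := extremal_generators_facts (isT : prime 2) genD.
case: genD => _ _ /= ox /setDP[_ notXy].
have [w w_prim] := C_prim_root_exists (expn_gt0 2 m).
have wV : w^-1 = w ^+ (2 ^ m).-1.
  by apply: mulr1_eq; rewrite -exprS prednK ?expn_gt0 // prim_expr_order.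
have TwN : Tmat w ^+ (2 ^ m) = 1 by rewrite TmatX prim_expr_order // Tmat1.
have XTw : Xmat * Tmat w = Tmat w ^+ (2 ^ m).-1 * Xmat by rewrite XmatT TmatX wV.
have Tw_faithful a : Tmat w ^+ a = 1 -> (2 ^ m %| a)%N.
  by rewrite TmatX => /Tmat_eq1/eqP; rewrite -(prim_order_dvd w_prim).
have TwX_neq1 a : Tmat w ^+ a * Xmat != 1 by rewrite TmatX TmatX_neq1.
pose f := dihedral_rep x y (2 ^ m) (Tmat w) Xmat.
have fE a b : f (x ^+ a * y ^+ b)%g = Tmat w ^+ a * Xmat ^+ b.
  by rewrite /f (dihedral_repE ox oy notXy TwN Xmat2).
have fM g h : f (g * h)%g = f g *m f h.
  exact: (dihedral_repM ox oy xy notXy defD TwN Xmat2 XTw) (in_setT g) (in_setT h).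
exists f; split; [|split=> //].
  move=> g h; apply: (dihedral_rep_inj ox oy xy notXy defD TwN Xmat2 XTw
                                       Tw_faithful TwX_neq1); exact: in_setT.
apply: gen_by_morph_image => // [|A].
  by rewrite /f (dihedral_rep1 ox oy notXy TwN Xmat2).
apply: iff_trans (T2pow_genP _ w_prim) _; split=> [[a [b ->]] | [g <-]].
  by exists (x ^+ a * y ^+ b)%g; rewrite fE.
by have [a [b ->]] := dihedral_decomp oy defD (in_setT g); exists a, b; rewrite fE.
Qed.
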